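(* Let $G=(V,E)$ be a simple cubic bipartite graph that has no potential 4-cycles, and let $F_1$ and $F_2$ be 2-factors of $G$ such that for every cycle $C$ of $(V,F_1)$ there exists a cycle $D$ of $(V,F_2)$ with $|V(D)|\ge 10$ and $|V(C)\cap V(D)|\ge 4$. Then $(V,F_1)$ or $(V,F_2)$ has at most $|V|/8$ connected components.
   Context: A 2-factor of a graph $G=(V,E)$ is a set $F\subseteq E$ such that every node of $V$ is incident to exactly two edges of $F$; the components of $(V,F)$ are simple cycles, and for such a cycle $C$, $V(C)$ denotes its node set and its size is $|V(C)|$. A set $S$ of 4 nodes is a potential 4-cycle if some 2-factor $F$ of $G$ has a cycle in $(V,F)$ with node set exactly $S$. A graph is cubic if every node has degree exactly 3. *)

From mathcomp Require Import all_boot.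
Set Implicit Arguments. Unset Strict Implicit. Unset Printing Implicit Defensive.

Definition simple_graph (T : finType) (e : rel T) : Prop :=
  irreflexive e /\ symmetric e.

Definition edges (T : finType) (e : rel T) : {set {set T}} :=
  [set A : {set T} | [exists x, exists y, e x y && (A == [set x; y])]].

Definition fdeg (T : finType) (F : {set {set T}}) (x : T) : nat :=
  #|[set A in F | x \in A]|.

Definition cubic (T : finType) (e : rel T) : Prop :=
  forall x : T, #|[set y | e x y]| = 3.

Definition bipartite (T : finType) (e : rel T) : Prop :=
  exists c : T -> bool, forall x y, e x y -> c x != c y.

Definition two_factor (T : finType) (e : rel T) (F : {set {set T}}) : Prop :=
  F \subset edges e /\ forall x : T, fdeg F x = 2.

Definition fadj (T : finType) (F : {set {set T}}) : rel T :=
  fun x y => [set x; y] \in F.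

(* Node set of the connected component of (V, F) containing x; for a
   2-factor these are exactly the node sets V(C) of the cycles C. *)
Definition cycle_nodes (T : finType) (F : {set {set T}}) (x : T) : {set T} :=
  [set y | connect (fadj F) x y].

Definition ncomp (T : finType) (F : {set {set T}}) : nat :=
  #|[set cycle_nodes F x | x : T]|.

Definition potential_4cycle (T : finType) (e : rel T) (S : {set T}) : Prop :=
  #|S| = 4 /\ exists F, two_factor e F /\ exists x, cycle_nodes F x = S.

From mathcomp Require Import all_boot zify.

Set Implicit Arguments. Unset Strict Implicit. Unset Printing Implicit Defensive.

(* Every cycle of F2 has at least 6 nodes: at least 3, even by bipartiteness, and
   not 4 since there are no potential 4-cycles.  Send each cycle C of F1 to a cycle
   f(C) of F2 with at least 10 nodes sharing at least 4 nodes with C.  The cycles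
   sent to a fixed D are disjoint, so if there are k >= 1 of them then
   |D| >= max(10, 4k) >= 2k + 6; if k = 0 still |D| >= 6.  Summing over the cycles
   of F2 gives 2 c(F1) + 6 c(F2) <= |V|, which is incompatible with both c(F1) and
   c(F2) exceeding |V|/8. *)

Lemma card_partition_setI (T : finType) (P : {set {set T}}) (D A : {set T}) :
  partition P D -> A \subset D -> #|A| = \sum_(B in P) #|B :&: A|.
Proof.
have sum1_setI (B : {set T}) : #|B :&: A| = \sum_(x in B | x \in A) 1.
  by rewrite -sum1_card; apply: eq_bigl => x; rewrite inE.
move=> partP /setIidPr {1}<-; rewrite sum1_setI (set_partition_big_cond P partP).
by apply: eq_bigr => B _; rewrite sum1_setI.
Qed.

Lemma card_meeting_blocks (T : finType) (P Q : {set {set T}}) (S D : {set T}) m :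
  partition P S -> D \subset S -> Q \subset P ->
  {in Q, forall C : {set T}, m <= #|C :&: D|} -> m * #|Q| <= #|D|.
Proof.
move=> partP sDS sQP meetQ.
rewrite (card_partition_setI partP sDS) (big_setID Q) /= (setIidPr sQP).
by rewrite mulnC -sum_nat_const; apply: leq_trans (leq_addr _ _); apply: leq_sum.
Qed.

Lemma partitions_weighted_count (T : finType) (P1 P2 : {set {set T}}) :
  partition P1 [set: T] -> partition P2 [set: T] ->
  {in P2, forall D : {set T}, 6 <= #|D|} ->
  {in P1, forall C : {set T}, exists2 D, D \in P2 & (10 <= #|D|) && (4 <= #|C :&: D|)} ->
  2 * #|P1| + 6 * #|P2| <= #|T|.
Proof.
move=> part1 part2 P2_ge6 P1_meet.
pose f C := odflt set0 [pick D in P2 | (10 <= #|D|) && (4 <= #|C :&: D|)].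
have fP C : C \in P1 -> [/\ f C \in P2, 10 <= #|f C| & 4 <= #|C :&: f C|].
  move=> /P1_meet[D DP2 DC]; rewrite /f.
  case: pickP => [D' /andP[-> /andP[-> ->]] // | none].
  by have := none D; rewrite DP2 DC.
pose Q D := [set C in P1 | f C == D].
have card_Q D : D \in P2 -> 2 * #|Q D| + 6 <= #|D|.
  move=> DP2; have le4 : 4 * #|Q D| <= #|D|.
    apply: (card_meeting_blocks part1 (subsetT D)); first by apply/subsetP=> C /setIdP[].
    by move=> C /setIdP[CP1 /eqP <-]; case: (fP C CP1).
  have [-> | [C]] := set_0Vmem (Q D); first by rewrite cards0 P2_ge6.
  case/setIdP=> CP1 /eqP fCD; have [_ ge10 _] := fP C CP1; rewrite fCD in ge10.
  lia.
have card_P1 : #|P1| = \sum_(D in P2) #|Q D|.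
  rewrite -sum1_card (partition_big f (mem P2)) /=; last by move=> C /fP[].
  by apply: eq_bigr => D _; rewrite -sum1_card; apply: eq_bigl => C; rewrite inE.
rewrite -cardsT (card_partition part2) card_P1 big_distrr [6 * _]mulnC -sum_nat_const.
by rewrite -big_split; apply: leq_sum.
Qed.

Lemma regular_bipartite_even (T : finType) (r : rel T) (c : pred T) (D : {set T}) k :
  symmetric r -> (forall x y, r x y -> c x != c y) -> 0 < k ->
  (forall x, x \in D -> [set y | r x y] \subset D /\ #|[set y | r x y]| = k) ->
  ~~ odd #|D|.
Proof.
move=> r_sym r_bip k_gt0 D_reg.
set W := D :&: [set x | c x]; set B := D :\: [set x | c x].
have degree_across (X Y : {set T}) : X \subset D ->
    (forall x y, x \in X -> r x y -> y \in Y) ->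
    \sum_(x in X) \sum_(y in Y) r x y = #|X| * k.
  move=> /subsetP sXD XY; rewrite -sum_nat_const; apply: eq_bigr => x Xx.
  have [_ <-] := D_reg x (sXD x Xx).
  rewrite -sum1dep_card big_mkcond [RHS]big_mkcond; apply: eq_bigr => y _.
  by case: (boolP (r x y)) => [/(XY x y Xx) ->|_]; rewrite ?if_same.
have flip x y : x \in D -> r x y -> (y \in D) && (c y == ~~ c x).
  move=> xD rxy; rewrite (subsetP (D_reg x xD).1) ?inE //.
  by move: (r_bip x y rxy); case: (c x); case: (c y).
have W_to_B x y : x \in W -> r x y -> y \in B.
  by case/setIP=> xD; rewrite !inE => cx /(flip x y xD) /andP[-> /eqP ->]; rewrite cx.
have B_to_W x y : x \in B -> r x y -> y \in W.
  by case/setDP=> xD; rewrite !inE => /negbTE cx /(flip x y xD) /andP[-> /eqP ->]; rewrite cx.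
have cross : #|W| * k = #|B| * k.
  rewrite -(degree_across W B) ?subsetIl // -(degree_across B W) ?subsetDl //.
  by rewrite exchange_big; apply: eq_bigr => x _; apply: eq_bigr => y _; rewrite r_sym.
have WB : #|W| = #|B| by apply/eqP; rewrite -(eqn_pmul2r k_gt0) cross.
by rewrite -(cardsID [set x | c x] D) WB addnn odd_double.
Qed.

Lemma set2_inj (T : finType) (x : T) : injective (fun y => [set x; y]).
Proof.
move=> y y' eq_xy; have /set2P[yx|//] : y \in [set x; y'] by rewrite -eq_xy set22.
by have /set2P[->|->] : y' \in [set x; y] by rewrite eq_xy set22.
Qed.

Section TwoFactor.

Variables (T : finType) (e : rel T) (F : {set {set T}}).
Hypotheses (e_irr : irreflexive e) (e_sym : symmetric e).
Hypotheses (F_edges : F \subset edges e) (F_deg : forall x, fdeg F x = 2).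

Definition fnbr (x : T) : {set T} := [set y | fadj F x y].

Lemma fadj_sym : symmetric (fadj F).
Proof. by move=> x y; rewrite /fadj setUC. Qed.

Lemma mem_F_edge A : A \in F -> exists a b, e a b /\ A = [set a; b].
Proof.
move/(subsetP F_edges); rewrite inE => /existsP[a /existsP[b /andP[eab /eqP ->]]].
by exists a, b.
Qed.

Lemma fadj_edge x y : fadj F x y -> e x y.
Proof.
move/mem_F_edge=> [a [b [eab eq_xy]]].
have ab : a != b by apply: contraTneq eab => ->; rewrite e_irr.
have xy : x != y by move: (cards2 x y); rewrite eq_xy cards2 ab; case: (x != y).
have /set2P[xE|xE] : x \in [set a; b] by rewrite -eq_xy set21.
all: have /set2P[yE|yE] : y \in [set a; b] by rewrite -eq_xy set22.
- by rewrite xE yE eqxx in xy.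
- by rewrite xE yE.
- by rewrite xE yE e_sym.
- by rewrite xE yE eqxx in xy.
Qed.

Lemma fnbr_irr x : x \notin fnbr x.
Proof. by rewrite inE; apply/negP => /fadj_edge; rewrite e_irr. Qed.

Lemma card_fnbr x : #|fnbr x| = 2.
Proof.
rewrite -(F_deg x) /fdeg -(card_imset _ (@set2_inj T x)); apply: eq_card => A.
rewrite inE; apply/imsetP/andP => [[y y_nbr ->]|[AF xA]].
  by rewrite inE in y_nbr; rewrite set21.
have [a [b [_ A_ab]]] := mem_F_edge AF.
move: xA; rewrite A_ab => /set2P[->|->].
  by exists b; rewrite // inE /fadj -A_ab.
by exists a; [rewrite inE /fadj setUC -A_ab | rewrite setUC].
Qed.

Lemma fnbr_sub_cycle_nodes x y : y \in cycle_nodes F x -> fnbr y \subset cycle_nodes F x.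
Proof.
rewrite inE => cxy; apply/subsetP => z; rewrite !inE => yz.
exact: connect_trans cxy (connect1 yz).
Qed.

Lemma cycle_nodes_id x : x \in cycle_nodes F x.
Proof. by rewrite inE connect0. Qed.

Lemma cycle_nodes_eq x y : y \in cycle_nodes F x -> cycle_nodes F y = cycle_nodes F x.
Proof.
rewrite inE => cxy; apply/setP=> z; rewrite !inE.
by rewrite (same_connect (sym_connect_sym fadj_sym) cxy).
Qed.

Lemma cycle_nodes_partition : partition [set cycle_nodes F x | x : T] [set: T].
Proof.
apply/and3P; split.
- rewrite eqEsubset subsetT; apply/subsetP=> x _; apply/bigcupP.
  by exists (cycle_nodes F x); [apply: imset_f | apply: cycle_nodes_id].
- apply/trivIsetP=> _ _ /imsetP[x _ ->] /imsetP[y _ ->]; apply: contraR.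
  case/pred0Pn=> z /andP[xz yz]; apply/eqP.
  by rewrite -(cycle_nodes_eq xz) -(cycle_nodes_eq yz).
- by apply/negP=> /imsetP[x _ x0]; have := cycle_nodes_id x; rewrite -x0 inE.
Qed.

Lemma card_cycle_nodes_ge3 x : 3 <= #|cycle_nodes F x|.
Proof.
have sub : x |: fnbr x \subset cycle_nodes F x.
  by rewrite subUset sub1set cycle_nodes_id fnbr_sub_cycle_nodes ?cycle_nodes_id.
by apply: leq_trans (subset_leq_card sub); rewrite cardsU1 fnbr_irr card_fnbr.
Qed.

Lemma card_cycle_nodes_even (c : pred T) x :
  (forall x y, e x y -> c x != c y) -> ~~ odd #|cycle_nodes F x|.
Proof.
move=> e_bip; apply: (@regular_bipartite_even _ (fadj F) c _ 2) => //.
- exact: fadj_sym.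
- by move=> y z /fadj_edge /e_bip.
- by move=> y Dy; rewrite fnbr_sub_cycle_nodes // card_fnbr.
Qed.

End TwoFactor.

Theorem lemma2 (T : finType) (e : rel T) (F1 F2 : {set {set T}}) :
  simple_graph e -> cubic e -> bipartite e ->
  (forall S : {set T}, ~ potential_4cycle e S) ->
  two_factor e F1 -> two_factor e F2 ->
  (forall x : T, exists y : T,
      10 <= #|cycle_nodes F2 y| /\ 4 <= #|cycle_nodes F1 x :&: cycle_nodes F2 y|) ->
  8 * ncomp F1 <= #|T| \/ 8 * ncomp F2 <= #|T|.
Proof.
move=> [e_irr e_sym] _ [c e_bip] no_potential_4cycle F1_factor F2_factor long_meet.
have F2_ge6 : {in [set cycle_nodes F2 x | x : T], forall D : {set T}, 6 <= #|D|}.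
  move=> _ /imsetP[x _ ->]; case: (F2_factor) => F2_edges F2_deg.
  have ge3 := card_cycle_nodes_ge3 e_irr e_sym F2_edges F2_deg x.
  have even := card_cycle_nodes_even e_irr e_sym F2_edges F2_deg x e_bip.
  have ne4 : #|cycle_nodes F2 x| != 4.
    apply/eqP=> card4; apply: (no_potential_4cycle (cycle_nodes F2 x)).
    by split=> //; exists F2; split=> //; exists x.
  lia.
have F1_meet : {in [set cycle_nodes F1 x | x : T], forall C : {set T},
    exists2 D, D \in [set cycle_nodes F2 x | x : T] & (10 <= #|D|) && (4 <= #|C :&: D|)}.
  move=> _ /imsetP[x _ ->]; have [y [ge10 meet4]] := long_meet x.
  by exists (cycle_nodes F2 y); [apply: imset_f | rewrite ge10 meet4].
have count : 2 * ncomp F1 + 6 * ncomp F2 <= #|T| :=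
  partitions_weighted_count (cycle_nodes_partition F1) (cycle_nodes_partition F2)
    F2_ge6 F1_meet.
lia.
Qed.
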